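(* Let $A$ be a strongly AUF algebra and let $e\in A$ be a generating idempotent. Then the map $$\mathrm{SLF}(A)\to\mathrm{SLF}(eAe),\qquad \psi\mapsto\psi|_{eAe}$$ is a linear isomorphism, whose inverse is $\mathrm{SLF}(eAe)\to\mathrm{SLF}(A)$, $\phi\mapsto\mathrm{Tr}^\phi$, where $\mathrm{Tr}^\phi$ is the left pseudotrace on $A$ associated to $\phi$ and the $A$-$(eAe)$ bimodule $Ae$.
   Context: All algebras are associative $\mathbb C$-algebras, not necessarily unital. An idempotent is an element $e$ with $e^2=e$. An algebra $A$ is AUF if there is a family $(e_i)_{i\in\mathfrak I}$ of mutually orthogonal idempotents with $\dim e_iAe_j<\infty$ and $A=\sum_{i,j}e_iAe_j$. A left $A$-module $M$ is quasicoherent if $\xi\in A\xi$ for all $\xi\in M$. Irreducible means nonzero with no nonzero proper submodules. An idempotent $e\in A$ is generating if every irreducible quasicoherent left $A$-module is a quotient of $Ae$; $A$ is strongly AUF if it is AUF and has a generating idempotent. $\mathrm{SLF}(C)$ is the space of linear $\phi:C\to\mathbb C$ with $\phi(xy)=\phi(yx)$. Note $eAe$ is unital with unit $e$, and $Ae$ is an $A$-$(eAe)$ bimodule by multiplication. Left coordinate system (for algebras $A,B$, $B$ unital, $M$ an $A$-$B$ bimodule): right $B$-module maps $\alpha_i:B\to M$, $\check\alpha^i:M\to B$, $i\in I$, such that (a) for each $\xi\in M$, $\check\alpha^i(\xi)=0$ for all but finitely many $i$ and $\sum_i\alpha_i\check\alpha^i(\xi)=\xi$; (b) for each $x\in A$,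 $x\circ\alpha_i=0$ and $\check\alpha^i\circ x=0$ for all but finitely many $i$. Given one, the left pseudotrace of $\phi\in\mathrm{SLF}(B)$ is $\mathrm{Tr}^\phi(x)=\sum_i\phi(\check\alpha^i(x\,\alpha_i(1_B)))$, $x\in A$; it is independent of the left coordinate system and lies in $\mathrm{SLF}(A)$. Under the hypotheses of the claim, the $A$-$(eAe)$ bimodule $Ae$ admits a left coordinate system, so $\mathrm{Tr}^\phi$ is defined. *)

(* Non-unital associative algebras over a field K are
   encoded as a K-vector space [A : lmodType K] together with an explicit
   bilinear associative multiplication [mul : A -> A -> A]. *)
From mathcomp Require Import all_boot all_algebra.
From mathcomp Require Import reals complex.
From Stdlib Require List.
Set Implicit Arguments.
Unset Strict Implicit.
Unset Printing Implicit Defensive.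
Import GRing.Theory.
Local Open Scope ring_scope.

Section AUF.
Variables (K : fieldType) (A : lmodType K) (mul : A -> A -> A).

Definition is_algebra : Prop :=
  (forall x y z, mul x (mul y z) = mul (mul x y) z) /\
  (forall a x y, mul a (x + y) = mul a x + mul a y) /\
  (forall a x y, mul (x + y) a = mul x a + mul y a) /\
  (forall (c : K) a x, mul a (c *: x) = c *: mul a x) /\
  (forall (c : K) a x, mul (c *: x) a = c *: mul x a).

Definition idempotent (e : A) : Prop := mul e e = e.

Definition findim (P : A -> Prop) : Prop :=
  exists s : seq A, forall x, P x ->
    exists c : nat -> K, x = \sum_(i < size s) c i *: s`_i.

Definition AUF : Prop :=
  exists (I : Type) (f : I -> A),
    (forall i, idempotent (f i)) /\
    (forall i j, i <> j -> mul (f i) (f j) = 0) /\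
    (forall i j, findim (fun x => exists a, x = mul (f i) (mul a (f j)))) /\
    (forall x, exists (s : seq (I * I)) (a : I * I -> A),
        x = \sum_(p <- s) mul (f p.1) (mul (a p) (f p.2))).

Definition is_module (M : lmodType K) (act : A -> M -> M) : Prop :=
  (forall a b m, act (mul a b) m = act a (act b m)) /\
  (forall a m n, act a (m + n) = act a m + act a n) /\
  (forall a b m, act (a + b) m = act a m + act b m) /\
  (forall (c : K) a m, act a (c *: m) = c *: act a m) /\
  (forall (c : K) a m, act (c *: a) m = c *: act a m).

Definition quasicoherent (M : lmodType K) (act : A -> M -> M) : Prop :=
  forall m, exists a, act a m = m.

Definition submodule (M : lmodType K) (act : A -> M -> M) (S : M -> Prop) : Prop :=
  S 0 /\ (forall m n, S m -> S n -> S (m + n)) /\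
  (forall (c : K) m, S m -> S (c *: m)) /\ (forall a m, S m -> S (act a m)).

Definition irreducible (M : lmodType K) (act : A -> M -> M) : Prop :=
  (exists m : M, m <> 0) /\
  forall S, submodule act S -> (forall m, S m -> m = 0) \/ (forall m, S m).

Definition in_Ae (e x : A) : Prop := exists a, x = mul a e.
Definition in_eAe (e x : A) : Prop := exists a, x = mul e (mul a e).

Definition quotient_of_Ae (e : A) (M : lmodType K) (act : A -> M -> M) : Prop :=
  exists f : A -> M,
    (forall x y, in_Ae e x -> in_Ae e y -> f (x + y) = f x + f y) /\
    (forall (c : K) x, in_Ae e x -> f (c *: x) = c *: f x) /\
    (forall a x, in_Ae e x -> f (mul a x) = act a (f x)) /\
    (forall m, exists x, in_Ae e x /\ f x = m).

Definition generating (e : A) : Prop :=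
  idempotent e /\
  forall (M : lmodType K) (act : A -> M -> M),
    is_module act -> quasicoherent act -> irreducible act -> quotient_of_Ae e act.

Definition strongly_AUF : Prop := AUF /\ exists e, generating e.

Definition SLF (psi : A -> K) : Prop :=
  (forall x y, psi (x + y) = psi x + psi y) /\
  (forall (c : K) x, psi (c *: x) = c * psi x) /\
  (forall x y, psi (mul x y) = psi (mul y x)).

(* SLF(eAe), functionals represented by functions A -> K, only their values
   on eAe matter *)
Definition SLF_eAe (e : A) (phi : A -> K) : Prop :=
  (forall x y, in_eAe e x -> in_eAe e y -> phi (x + y) = phi x + phi y) /\
  (forall (c : K) x, in_eAe e x -> phi (c *: x) = c * phi x) /\
  (forall x y, in_eAe e x -> in_eAe e y -> phi (mul x y) = phi (mul y x)).

(* Left coordinate system for the A-(eAe) bimodule Ae: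
   al i : eAe -> Ae,  ch i : Ae -> eAe, right eAe-module maps. *)
Definition left_coord_sys (e : A) (I : Type) (al ch : I -> A -> A) : Prop :=
  (forall i b, in_eAe e b -> in_Ae e (al i b)) /\
  (forall i b b', in_eAe e b -> in_eAe e b' -> al i (b + b') = al i b + al i b') /\
  (forall i (c : K) b, in_eAe e b -> al i (c *: b) = c *: al i b) /\
  (forall i b b', in_eAe e b -> in_eAe e b' -> al i (mul b b') = mul (al i b) b') /\
  (forall i x, in_Ae e x -> in_eAe e (ch i x)) /\
  (forall i x y, in_Ae e x -> in_Ae e y -> ch i (x + y) = ch i x + ch i y) /\
  (forall i (c : K) x, in_Ae e x -> ch i (c *: x) = c *: ch i x) /\
  (forall i x b, in_Ae e x -> in_eAe e b -> ch i (mul x b) = mul (ch i x) b) /\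
  (forall xi, in_Ae e xi -> exists s : seq I, List.NoDup s /\
      (forall i, ~ List.In i s -> ch i xi = 0) /\
      xi = \sum_(i <- s) al i (ch i xi)) /\
  (forall x, exists s : seq I, forall i, ~ List.In i s ->
      (forall b, in_eAe e b -> mul x (al i b) = 0) /\
      (forall xi, in_Ae e xi -> ch i (mul x xi) = 0)).

(* t is the left pseudotrace Tr^phi computed from (al, ch):
   t x = sum_i phi (ch i (x * al i e))   (al i e = al_i(1_B), a finite sum) *)
Definition is_left_pseudotrace (e : A) (I : Type) (al ch : I -> A -> A)
    (phi t : A -> K) : Prop :=
  forall x, exists s : seq I, List.NoDup s /\
    (forall i, ~ List.In i s -> phi (ch i (mul x (al i e))) = 0) /\
    t x = \sum_(i <- s) phi (ch i (mul x (al i e))).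

End AUF.

(* Every idempotent u of A lies in the two-sided ideal AeA.  Otherwise Zorn's
   lemma gives a left ideal J that is maximal among those containing
   AeA + A(1 - u) but not u; then A/J is an irreducible quasicoherent module on
   which e acts by zero, and a nonzero module killed by e is never a quotient
   of Ae.  Since A is spanned by the e_i A e_j, it follows that A = AeA.

   Writing each e_i = sum_k x_k e y_k, the maps b |-> e_i x_k e b and
   v |-> e y_k e_i v form a left coordinate system of Ae.  For any coordinate
   system, Tr^phi is symmetric because
     Tr^phi(xy) = sum_(i,j) phi(ch_i(x al_j(e)) ch_j(y al_i(e))),
   and it restricts to phi on eAe because sum_i al_i(ch_i b) = b.  Conversely a
   symmetric psi satisfies psi(a e b) = psi(eb . ae) with eb . ae in eAe, so on
   A = AeA it is determined by its restriction, i.e. psi = Tr^(psi|eAe). *)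

From HB Require Import structures.
From mathcomp Require Import all_boot all_algebra.
From mathcomp Require Import reals complex.
From mathcomp Require Import boolp classical_sets fsbigop.
From Stdlib Require List.
Set Implicit Arguments.
Unset Strict Implicit.
Unset Printing Implicit Defensive.
Import GRing.Theory.
Local Open Scope classical_set_scope.
Local Open Scope ring_scope.

Section SubspaceQuotient.
Local Open Scope quotient_scope.
Variables (K : fieldType) (V : lmodType K).

Record subspace (P : set V) : Prop := Subspace {
  subspace0 : P 0;
  subspaceD : forall x y, P x -> P y -> P (x + y);
  subspaceZ : forall (c : K) x, P x -> P (c *: x) }.

Variables (P : set V) (subP : subspace P).

Lemma subspaceN x : P x -> P (- x).
Proof. by move=> /(subspaceZ subP (-1)); rewrite scaleN1r. Qed.

Lemma subspace_sum (J : Type) (s : seq J) (F : J -> V) :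
  (forall j, P (F j)) -> P (\sum_(j <- s) F j).
Proof.
move=> PF; elim: s => [|j s IHs]; rewrite ?big_nil ?big_cons; last exact: subspaceD.
exact: subspace0.
Qed.

Lemma subspace_sum_additive (W : zmodType) (f : V -> W) :
  f 0 = 0 -> (forall x y, P x -> P y -> f (x + y) = f x + f y) ->
  forall (J : Type) (s : seq J) (F : J -> V),
  (forall j, P (F j)) -> f (\sum_(j <- s) F j) = \sum_(j <- s) f (F j).
Proof.
move=> f0 fD J s F PF; elim: s => [|j s IHs]; rewrite ?big_nil // !big_cons.
by rewrite fD ?IHs //; apply: subspace_sum.
Qed.

Definition quot_rel (x y : V) : bool := `[< P (x - y) >].

Lemma quot_rel_refl : reflexive quot_rel.
Proof. by move=> x; apply/asboolP; rewrite subrr; apply: subspace0. Qed.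

Lemma quot_rel_sym : symmetric quot_rel.
Proof. by move=> x y; apply/asboolP/asboolP => /subspaceN; rewrite opprB. Qed.

Lemma quot_rel_trans : transitive quot_rel.
Proof.
move=> y x z /asboolP Pxy /asboolP Pyz; apply/asboolP.
by have := subspaceD subP Pxy Pyz; rewrite addrA subrK.
Qed.

Canonical quot_equiv := EquivRel quot_rel quot_rel_refl quot_rel_sym quot_rel_trans.
Definition lquot := {eq_quot quot_equiv}.
HB.instance Definition _ := Choice.on lquot.
HB.instance Definition _ := EqQuotient.on lquot.

Definition qpi (x : V) : lquot := \pi_lquot x.

Lemma qpiP x y : qpi x = qpi y <-> P (x - y).
Proof. by split=> [/eqmodP/asboolP | Pxy]; last apply/eqmodP/asboolP. Qed.

Lemma qpi_repr (q : lquot) : qpi (repr q) = q.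
Proof. exact: reprK. Qed.

Lemma lquotW (Q : lquot -> Prop) : (forall x, Q (qpi x)) -> forall q, Q q.
Proof. by move=> Qpi q; rewrite -(qpi_repr q). Qed.

Lemma repr_qpi x : P (repr (qpi x) - x).
Proof. by apply/qpiP; rewrite qpi_repr. Qed.

Definition qadd (a b : lquot) := qpi (repr a + repr b).
Definition qopp (a : lquot) := qpi (- repr a).
Definition qscale (c : K) (a : lquot) := qpi (c *: repr a).

Lemma qaddE x y : qadd (qpi x) (qpi y) = qpi (x + y).
Proof.
apply/qpiP; have := subspaceD subP (repr_qpi x) (repr_qpi y).
by rewrite opprD addrACA.
Qed.

Lemma qoppE x : qopp (qpi x) = qpi (- x).
Proof. by apply/qpiP; have := subspaceN (repr_qpi x); rewrite opprB opprK addrC. Qed.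

Lemma qscaleE c x : qscale c (qpi x) = qpi (c *: x).
Proof. by apply/qpiP; have := subspaceZ subP c (repr_qpi x); rewrite scalerBr. Qed.

Lemma qaddA : associative qadd.
Proof. by elim/lquotW=> x; elim/lquotW=> y; elim/lquotW=> z; rewrite !qaddE addrA. Qed.

Lemma qaddC : commutative qadd.
Proof. by elim/lquotW=> x; elim/lquotW=> y; rewrite !qaddE addrC. Qed.

Lemma qadd0 : left_id (qpi 0) qadd.
Proof. by elim/lquotW=> x; rewrite qaddE add0r. Qed.

Lemma qaddN : left_inverse (qpi 0) qopp qadd.
Proof. by elim/lquotW=> x; rewrite qoppE qaddE addNr. Qed.

HB.instance Definition _ := GRing.isZmodule.Build lquot qaddA qaddC qadd0 qaddN.

Lemma qpiD x y : qpi (x + y) = qpi x + qpi y.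
Proof. by rewrite -qaddE. Qed.

Lemma qscaleA a b q : qscale a (qscale b q) = qscale (a * b) q.
Proof. by elim/lquotW: q => x; rewrite !qscaleE scalerA. Qed.

Lemma qscale1 : left_id 1 qscale.
Proof. by elim/lquotW=> x; rewrite qscaleE scale1r. Qed.

Lemma qscaleDr : right_distributive qscale +%R.
Proof.
by move=> a; elim/lquotW=> x; elim/lquotW=> y; rewrite -qpiD !qscaleE scalerDr qpiD.
Qed.

Lemma qscaleDl q : {morph qscale^~ q : a b / a + b}.
Proof. by elim/lquotW: q => x a b; rewrite !qscaleE scalerDl qpiD. Qed.

HB.instance Definition _ :=
  GRing.Zmodule_isLmodule.Build K lquot qscaleA qscale1 qscaleDr qscaleDl.

Lemma qpiZ c x : qpi (c *: x) = c *: qpi x.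
Proof. by rewrite -qscaleE. Qed.

Lemma qpi_eq0 x : qpi x = 0 <-> P x.
Proof. by rewrite -[0]/(qpi 0) qpiP subr0. Qed.

End SubspaceQuotient.

Lemma InP (T : eqType) (x : T) (s : seq T) : List.In x s <-> x \in s.
Proof.
elim: s => [//|y s IHs] /=; rewrite in_cons; split.
  by case=> [->|/IHs ->]; rewrite ?eqxx ?orbT.
by case/orP=> [/eqP ->|/IHs]; [left|right].
Qed.

Lemma NoDupP (T : eqType) (s : seq T) : List.NoDup s <-> uniq s.
Proof.
elim: s => [|y s IHs] /=; first by split=> // _; constructor.
split=> [nd | /andP[y_s us]].
  by inversion nd; apply/andP; split; [apply/negP => /InP | apply/IHs].
by constructor; [move/InP; apply/negP | apply/IHs].
Qed.

Lemma fsumT_seq (I : choiceType) (V : zmodType) (s : seq I) (F : I -> V) :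
  uniq s -> (forall i, i \notin s -> F i = 0) ->
  \sum_(i \in [set: I]) F i = \sum_(i <- s) F i.
Proof.
move=> us F0; rewrite [RHS]fsbig_seq //; symmetry; apply: fsbig_widen => // i [_ s_i].
by apply: F0; apply/negP.
Qed.

Section NonUnitalAlgebra.
Variables (K : fieldType) (A : lmodType K) (mul : A -> A -> A).

Section Modules.
Variables (M : lmodType K) (act : A -> M -> M).
Hypothesis modM : is_module mul act.

Lemma act0r a : act a 0 = 0.
Proof.
by case: modM => _ [_ [_ [actZr _]]]; rewrite -(scale0r (0 : M)) actZr !scale0r.
Qed.

Lemma act0l m : act 0 m = 0.
Proof.
by case: modM => _ [_ [_ [_ actZl]]]; rewrite -(scale0r (0 : A)) actZl scale0r.
Qed.

Lemma irreducible_quasicoherent :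
  irreducible act -> (exists a m, act a m <> 0) -> quasicoherent act.
Proof.
case: modM => actM [actDr [actDl [actZr actZl]]] [_ irrM] [a0 [m0 am0]] m.
have [->|m_neq0] := pselect (m = 0); first by exists 0; rewrite act0r.
pose Am m' := exists a, m' = act a m.
have subAm : submodule act Am.
  split; first by exists 0; rewrite act0l.
  split; first by move=> _ _ [a ->] [b ->]; exists (a + b); rewrite actDl.
  split; first by move=> c _ [a ->]; exists (c *: a); rewrite actZl.
  by move=> b _ [a ->]; exists (mul b a); rewrite actM.
have [Am0|AmT] := irrM Am subAm; last by have [a am] := AmT m; exists a; rewrite -am.
pose ann m' := forall a, act a m' = 0.
have subann : submodule act ann.
  split; first by move=> a; apply: act0r.
  split; first by move=> x y annx anny a; rewrite actDr annx anny addr0.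
  split; first by move=> c x annx a; rewrite actZr annx scaler0.
  by move=> b x annx a; rewrite -actM annx.
have [ann0|annT] := irrM ann subann; last by case: (am0 (annT m0 a0)).
by case: m_neq0; apply: ann0 => a; apply: Am0; exists a.
Qed.

Lemma quotient_of_Ae_eq0 e : idempotent mul e -> quotient_of_Ae mul e act ->
  (forall m, act e m = 0) -> forall m : M, m = 0.
Proof.
move=> ide [f [_ [_ [fM fsurj]]]] e0 m.
have fe : f e = 0 by rewrite -ide fM ?e0 //; exists e.
by have [_ [[a ->] <-]] := fsurj m; rewrite fM ?fe ?act0r //; exists e.
Qed.

End Modules.

Hypothesis alg : is_algebra mul.

Lemma amulA x y z : mul x (mul y z) = mul (mul x y) z.
Proof. by case: alg. Qed.

Lemma amulDr a x y : mul a (x + y) = mul a x + mul a y.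
Proof. by case: alg => _ []. Qed.

Lemma amulDl a x y : mul (x + y) a = mul x a + mul y a.
Proof. by case: alg => _ [] _ []. Qed.

Lemma amulZr (c : K) a x : mul a (c *: x) = c *: mul a x.
Proof. by case: alg => _ [] _ [] _ []. Qed.

Lemma amulZl (c : K) x a : mul (c *: x) a = c *: mul x a.
Proof. by case: alg => _ [] _ [] _ []. Qed.

Lemma amul0r x : mul 0 x = 0.
Proof. by rewrite -(scale0r (0 : A)) amulZl !scale0r. Qed.

Lemma amulr0 x : mul x 0 = 0.
Proof. by rewrite -(scale0r (0 : A)) amulZr !scale0r. Qed.

Lemma amulBr a x y : mul a (x - y) = mul a x - mul a y.
Proof. by rewrite amulDr -scaleN1r amulZr scaleN1r. Qed.

Lemma amulBl a x y : mul (x - y) a = mul x a - mul y a.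
Proof. by rewrite amulDl -scaleN1r amulZl scaleN1r. Qed.

Lemma amul_sumr (I : Type) (s : seq I) (F : I -> A) a :
  mul a (\sum_(i <- s) F i) = \sum_(i <- s) mul a (F i).
Proof. by elim: s => [|i s IHs]; rewrite ?big_nil ?amulr0 // !big_cons amulDr IHs. Qed.

Lemma amul_suml (I : Type) (s : seq I) (F : I -> A) a :
  mul (\sum_(i <- s) F i) a = \sum_(i <- s) mul (F i) a.
Proof. by elim: s => [|i s IHs]; rewrite ?big_nil ?amul0r // !big_cons amulDl IHs. Qed.

Record lideal (S : set A) : Prop := LIdeal {
  lideal0 : S 0;
  lidealD : forall x y, S x -> S y -> S (x + y);
  lidealZ : forall (c : K) x, S x -> S (c *: x);
  lidealM : forall a x, S x -> S (mul a x) }.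

Lemma lideal_subspace S : lideal S -> subspace S.
Proof. by case. Qed.

Lemma lideal_bigcup_chain (I : Type) (D : set I) (F : I -> set A) :
  D !=set0 -> (forall i j, D i -> D j -> F i `<=` F j \/ F j `<=` F i) ->
  (forall i, D i -> lideal (F i)) -> lideal (\bigcup_(i in D) F i).
Proof.
move=> [i0 Di0] totF idF.
have common x y : (\bigcup_(i in D) F i) x -> (\bigcup_(i in D) F i) y ->
    exists2 i, D i & F i x /\ F i y.
  move=> [i Di Fix] [j Dj Fjy].
  case: (totF i j Di Dj) => [Fij|Fji]; [exists j | exists i] => //.
    by split=> //; apply: Fij.
  by split=> //; apply: Fji.
split.
- by exists i0; last exact: lideal0 (idF i0 Di0).
- move=> x y Ux Uy; have [i Di [Fix Fiy]] := common x y Ux Uy.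
  by exists i; last exact: lidealD (idF i Di) _ _ Fix Fiy.
- by move=> c x [i Di Fix]; exists i; last exact: lidealZ (idF i Di) _ _ Fix.
- by move=> a x [i Di Fix]; exists i; last exact: lidealM (idF i Di) _ _ Fix.
Qed.

Lemma maximal_lideal_avoiding (L : set A) u : lideal L -> ~ L u ->
  exists J, [/\ lideal J, L `<=` J, ~ J u &
             forall B, lideal B -> J `<=` B -> ~ B u -> B `<=` J].
Proof.
move=> idL Lu.
(* [X `|` L] rather than [X], so that the union of the empty chain is admissible *)
pose admissible X := lideal (X `|` L) /\ ~ (X `|` L) u.
have [X [[idXL XLu] maxX]] :
    exists X, admissible X /\ forall B, X `<` B -> ~ admissible B.
  apply: Zorn_bigcup => F Fadm totF.
  have [F_neq0|/nonemptyPn->] := pselect (F !=set0); last first.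
    by rewrite /admissible bigcup_set0 set0U.
  rewrite /admissible -bigcupUl //; split.
    apply: lideal_bigcup_chain => // [X Y FX FY|X FX]; last exact: (Fadm X FX).1.
    by case: (totF X Y FX FY) => XY; [left|right]; apply: setSU.
  by move=> [X FX XLu]; exact: (Fadm X FX).2.
exists (X `|` L); split=> // B idB XLB Bu z Bz.
apply: contrapT => XLz; apply: (maxX B).
  split=> [|BX]; first by apply: subset_trans XLB; apply: subsetUl.
  by apply: XLz; left; apply: BX.
by rewrite /admissible setUidl //; apply: subset_trans XLB; apply: subsetUr.
Qed.

Definition in_AeA (e z : A) : Prop :=
  exists s : seq (A * A), z = \sum_(p <- s) mul p.1 (mul e p.2).

Lemma lideal_AeA e : lideal (in_AeA e).
Proof.
split.
- by exists [::]; rewrite big_nil.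
- by move=> _ _ [s ->] [t ->]; exists (s ++ t); rewrite big_cat.
- move=> c _ [s ->]; exists [seq (c *: p.1, p.2) | p <- s].
  by rewrite big_map scaler_sumr; apply: eq_bigr => p _; rewrite amulZl.
- move=> a _ [s ->]; exists [seq (mul a p.1, p.2) | p <- s].
  by rewrite big_map amul_sumr; apply: eq_bigr => p _; rewrite amulA.
Qed.

Lemma in_AeAr e a x : in_AeA e x -> in_AeA e (mul x a).
Proof.
move=> [s ->]; exists [seq (p.1, mul p.2 a) | p <- s].
by rewrite big_map amul_suml; apply: eq_bigr => p _; rewrite -!amulA.
Qed.

Lemma in_AeA_idem e x : idempotent mul e -> in_AeA e (mul e x).
Proof. by move=> ide; exists [:: (e, x)]; rewrite big_seq1 amulA ide. Qed.

(* [AeA + A(1 - u)], written without a unit *)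
Definition AeA_add_A1u (e u z : A) : Prop :=
  exists n x, in_AeA e n /\ z = n + (x - mul x u).

Lemma lideal_AeA_add_A1u e u : lideal (AeA_add_A1u e u).
Proof.
have [AeA0 AeAD AeAZ AeAM] := lideal_AeA e.
split.
- by exists 0, 0; split=> //; rewrite amul0r !subrr addr0.
- move=> _ _ [n [x [AeAn ->]]] [n' [x' [AeAn' ->]]].
  exists (n + n'), (x + x'); split; first exact: AeAD.
  by rewrite amulDl opprD addrACA; congr (_ + _); rewrite addrACA.
- move=> c _ [n [x [AeAn ->]]]; exists (c *: n), (c *: x); split; first exact: AeAZ.
  by rewrite amulZl -scalerBr -scalerDr.
- move=> a _ [n [x [AeAn ->]]]; exists (mul a n), (mul a x); split; first exact: AeAM.
  by rewrite amulDr amulBr amulA.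
Qed.

Lemma notin_AeA_add_A1u e u :
  idempotent mul u -> ~ in_AeA e u -> ~ AeA_add_A1u e u u.
Proof.
move=> idu AeAu [n [x [AeAn un]]]; apply: AeAu.
suff -> : u = mul n u by apply: in_AeAr.
by rewrite -{1}idu {1}un amulDl amulBl -amulA idu subrr addr0.
Qed.

Definition lideal_adjoin (J : set A) (v z : A) : Prop :=
  exists j a (c : K), J j /\ z = j + mul a v + c *: v.

Lemma lideal_adjoinP J v : lideal J ->
  [/\ lideal (lideal_adjoin J v), J `<=` lideal_adjoin J v & lideal_adjoin J v v].
Proof.
move=> [J0 JD JZ JM]; split; last 2 first.
- by move=> j Jj; exists j, 0, 0; rewrite amul0r scale0r !addr0.
- by exists 0, 0, 1; rewrite amul0r scale1r !add0r.
split.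
- by exists 0, 0, 0; rewrite amul0r scale0r !addr0.
- move=> _ _ [j [a [c [Jj ->]]]] [j' [a' [c' [Jj' ->]]]].
  exists (j + j'), (a + a'), (c + c'); split; first exact: JD.
  by rewrite amulDl scalerDl addrACA; congr (_ + _); rewrite addrACA.
- move=> k _ [j [a [c [Jj ->]]]]; exists (k *: j), (k *: a), (k * c).
  by split; [exact: JZ | rewrite !scalerDr amulZl scalerA].
- move=> b _ [j [a [c [Jj ->]]]]; exists (mul b j), (mul b a + c *: b), 0.
  split; first exact: JM.
  by rewrite scale0r addr0 !amulDr amulZr amulDl amulZl amulA addrA.
Qed.

Section QuotientModule.
Variables (J : set A) (idJ : lideal J).

Local Notation pi := (qpi (lideal_subspace idJ)).

Definition lquot_act (a : A) (q : lquot (lideal_subspace idJ)) :=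
  pi (mul a (repr q)).

Lemma lquot_actE a v : lquot_act a (pi v) = pi (mul a v).
Proof.
apply/qpiP; rewrite -amulBr; apply: lidealM idJ _ _ _.
by apply/(qpiP (lideal_subspace idJ)); rewrite qpi_repr.
Qed.

Lemma lquot_module : is_module mul lquot_act.
Proof.
split; first by move=> a b; elim/lquotW=> v; rewrite !lquot_actE amulA.
split; first by move=> a; elim/lquotW=> v; elim/lquotW=> w;
  rewrite -qpiD !lquot_actE amulDr qpiD.
split; first by move=> a b; elim/lquotW=> v; rewrite !lquot_actE amulDl qpiD.
split; first by move=> c a; elim/lquotW=> v; rewrite -qpiZ !lquot_actE amulZr qpiZ.
by move=> c a; elim/lquotW=> v; rewrite !lquot_actE amulZl qpiZ.
Qed.

Variable u : A.
Hypotheses (Ju : ~ J u) (A1u_J : forall x, J (x - mul x u))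
  (maxJ : forall B, lideal B -> J `<=` B -> ~ B u -> B `<=` J).

Lemma lquot_u_neq0 : pi u <> 0.
Proof. by move/qpi_eq0. Qed.

Lemma lquot_cyclic v : pi v = lquot_act v (pi u).
Proof. by rewrite lquot_actE; apply/qpiP. Qed.

Lemma lquot_irreducible : irreducible lquot_act.
Proof.
split=> [|S [_ [SD [SZ SM]]]]; first by exists (pi u); apply: lquot_u_neq0.
have [S0|/existsNP [m /not_implyP [Sm m_neq0]]] := pselect (forall m, S m -> m = 0).
  by left.
right; move: m Sm m_neq0; elim/lquotW=> v Sv pv_neq0.
have Jv : ~ J v by move/(qpi_eq0 (lideal_subspace idJ)).
have [idJv Jv_sub vJv] := lideal_adjoinP v idJ.
have [j [a [c [Jj uE]]]] : lideal_adjoin J v u.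
  by apply: contrapT => Jvu; apply: Jv; apply: maxJ idJv Jv_sub Jvu _ vJv.
have Su : S (pi u).
  rewrite uE !qpiD (proj2 (qpi_eq0 _ _) Jj) add0r -lquot_actE qpiZ.
  by apply: SD; [apply: SM | apply: SZ].
by elim/lquotW=> w; rewrite lquot_cyclic; apply: SM.
Qed.

End QuotientModule.

Lemma generating_idempotent_in_AeA e u :
  generating mul e -> idempotent mul u -> in_AeA e u.
Proof.
move=> [ide gen] idu; apply: contrapT => AeAu.
have [J [idJ LJ Ju maxJ]] := maximal_lideal_avoiding (lideal_AeA_add_A1u e u)
  (notin_AeA_add_A1u idu AeAu).
have A1u_J x : J (x - mul x u).
  by apply: LJ; exists 0, x; split; [exact: lideal0 (lideal_AeA e) | rewrite add0r].
pose act := @lquot_act J idJ.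
have modM : is_module mul act := lquot_module idJ.
have irrM := lquot_irreducible idJ Ju A1u_J maxJ.
have qcM : quasicoherent act.
  apply: irreducible_quasicoherent irrM _ => //; exists u, (qpi (lideal_subspace idJ) u).
  by rewrite /act lquot_actE idu; apply: lquot_u_neq0.
have e0 m : act e m = 0.
  elim/lquotW: m => v; rewrite /act lquot_actE; apply/qpi_eq0; apply: LJ.
  by exists (mul e v), 0; split; [exact: in_AeA_idem | rewrite amul0r subrr addr0].
have Ae_quot := gen _ _ modM qcM irrM.
have := quotient_of_Ae_eq0 modM ide Ae_quot e0 (qpi (lideal_subspace idJ) u).
exact: lquot_u_neq0 Ju.
Qed.

Lemma AUF_generating_in_AeA e : AUF mul -> generating mul e -> forall x, in_AeA e x.
Proof.
move=> [I [f [idf [_ [_ fdec]]]]] gen x.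
have [s [a ->]] := fdec x.
have [AeA0 AeAD _ _] := lideal_AeA e.
elim: s => [|p s IHs]; rewrite ?big_nil ?big_cons //.
by apply: AeAD IHs; apply: in_AeAr; apply: generating_idempotent_in_AeA gen (idf p.1).
Qed.

Lemma SLF_restrict e psi : SLF mul psi -> SLF_eAe mul e psi.
Proof.
by move=> [psiD [psiZ psiC]]; split=> [x y _ _|]; last split=> [c x _|x y _ _].
Qed.

Section Pseudotrace.
Variable e : A.
Hypothesis ide : idempotent mul e.

Local Notation eAe := (in_eAe mul e).
Local Notation Ae := (in_Ae mul e).

Lemma lideal_Ae : lideal Ae.
Proof.
split.
- by exists 0; rewrite amul0r.
- by move=> _ _ [a ->] [b ->]; exists (a + b); rewrite amulDl.
- by move=> c _ [a ->]; exists (c *: a); rewrite amulZl.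
- by move=> b _ [a ->]; exists (mul b a); rewrite amulA.
Qed.

Lemma subspace_eAe : subspace eAe.
Proof.
split.
- by exists 0; rewrite amul0r amulr0.
- by move=> _ _ [a ->] [b ->]; exists (a + b); rewrite amulDl amulDr.
- by move=> c _ [a ->]; exists (c *: a); rewrite amulZl amulZr.
Qed.

Lemma eAe_e : eAe e.
Proof. by exists e; rewrite !ide. Qed.

Lemma eAe_Ae b : eAe b -> Ae b.
Proof. by move=> [a ->]; exists (mul e a); rewrite amulA. Qed.

Lemma eAe_idl b : eAe b -> mul e b = b.
Proof. by move=> [a ->]; rewrite amulA ide. Qed.

Lemma Ae_idr x : Ae x -> mul x e = x.
Proof. by move=> [a ->]; rewrite -amulA ide. Qed.

Lemma Ae_eAe x : Ae x -> eAe (mul e x).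
Proof. by move=> [a ->]; exists a. Qed.

Variables (I : choiceType) (al ch : I -> A -> A).
Hypothesis lcs : left_coord_sys mul e al ch.

Lemma al_Ae i b : eAe b -> Ae (al i b).
Proof. by case: lcs => h _; apply: h. Qed.

Lemma al_Z i (c : K) b : eAe b -> al i (c *: b) = c *: al i b.
Proof. by case: lcs => _ [_ [h _]]; apply: h. Qed.

Lemma al_M i b b' : eAe b -> eAe b' -> al i (mul b b') = mul (al i b) b'.
Proof. by case: lcs => _ [_ [_ [h _]]]; apply: h. Qed.

Lemma ch_eAe i x : Ae x -> eAe (ch i x).
Proof. by case: lcs => _ [_ [_ [_ [h _]]]]; apply: h. Qed.

Lemma ch_D i x y : Ae x -> Ae y -> ch i (x + y) = ch i x + ch i y.
Proof. by case: lcs => _ [_ [_ [_ [_ [h _]]]]]; apply: h. Qed.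

Lemma ch_Z i (c : K) x : Ae x -> ch i (c *: x) = c *: ch i x.
Proof. by case: lcs => _ [_ [_ [_ [_ [_ [h _]]]]]]; apply: h. Qed.

Lemma ch_M i x b : Ae x -> eAe b -> ch i (mul x b) = mul (ch i x) b.
Proof. by case: lcs => _ [_ [_ [_ [_ [_ [_ [h _]]]]]]]; apply: h. Qed.

Lemma coord_expansion xi : Ae xi -> exists s : seq I, uniq s /\
  (forall i, i \notin s -> ch i xi = 0) /\ xi = \sum_(i <- s) al i (ch i xi).
Proof.
case: lcs => _ [_ [_ [_ [_ [_ [_ [_ [h _]]]]]]]] /h [s [/NoDupP us [s0 xiE]]].
by exists s; split=> //; split=> // i s_i; apply: s0 => /InP; apply/negP.
Qed.

Definition coord_supp x (s : seq I) := forall i, i \notin s ->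
  (forall b, eAe b -> mul x (al i b) = 0) /\ (forall xi, Ae xi -> ch i (mul x xi) = 0).

Lemma exists_coord_supp2 x y :
  exists s, [/\ uniq s, coord_supp x s & coord_supp y s].
Proof.
case: lcs => _ [_ [_ [_ [_ [_ [_ [_ [_ h]]]]]]]].
have [[s hs] [t ht]] := (h x, h y).
exists (undup (s ++ t)); split=> [|i|i]; first exact: undup_uniq.
  all: rewrite mem_undup mem_cat negb_or.
  by case/andP=> s_i _; apply: hs => /InP; apply/negP.
by case/andP=> _ t_i; apply: ht => /InP; apply/negP.
Qed.

Lemma al0 i : al i 0 = 0.
Proof.
by rewrite -(scale0r (0 : A)) al_Z ?scale0r //; apply: subspace0 subspace_eAe.
Qed.

Lemma ch0 i : ch i 0 = 0.
Proof. by rewrite -(scale0r (0 : A)) ch_Z ?scale0r //; apply: lideal0 lideal_Ae. Qed.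

Lemma al_Ae_e i : Ae (al i e).
Proof. exact/al_Ae/eAe_e. Qed.

Lemma alE i b : eAe b -> al i b = mul (al i e) b.
Proof. by move=> eAeb; rewrite -al_M ?eAe_idl //; apply: eAe_e. Qed.

Lemma ch_sum i (J : Type) (s : seq J) (F : J -> A) : (forall j, Ae (F j)) ->
  ch i (\sum_(j <- s) F j) = \sum_(j <- s) ch i (F j).
Proof.
move=> AeF.
by rewrite (subspace_sum_additive (lideal_subspace lideal_Ae) (ch0 i) (@ch_D i) s AeF).
Qed.

Lemma mul_coord_expansion x s xi : uniq s -> coord_supp x s -> Ae xi ->
  mul x xi = \sum_(j <- s) mul x (al j (ch j xi)).
Proof.
move=> us supp_x Aexi; have [t [ut [t0 xiE]]] := coord_expansion Aexi.
rewrite {1}xiE amul_sumr -(fsumT_seq ut) ?(fsumT_seq us) // => j j_n.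
  by apply: (supp_x j j_n).1; apply: ch_eAe.
by rewrite t0 // al0 amulr0.
Qed.

Lemma Ae_mul_al x i : Ae (mul x (al i e)).
Proof. exact/(lidealM lideal_Ae)/al_Ae_e. Qed.

Variable phi : A -> K.
Hypothesis phiS : SLF_eAe mul e phi.

Lemma phiD b b' : eAe b -> eAe b' -> phi (b + b') = phi b + phi b'.
Proof. by case: phiS => h _; apply: h. Qed.

Lemma phiZ (c : K) b : eAe b -> phi (c *: b) = c * phi b.
Proof. by case: phiS => _ [h _]; apply: h. Qed.

Lemma phiC b b' : eAe b -> eAe b' -> phi (mul b b') = phi (mul b' b).
Proof. by case: phiS => _ [_ h]; apply: h. Qed.

Lemma phi0 : phi 0 = 0.
Proof. by rewrite -(scale0r (0 : A)) phiZ ?mul0r //; apply: subspace0 subspace_eAe. Qed.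

Lemma phi_sum (J : Type) (s : seq J) (F : J -> A) : (forall j, eAe (F j)) ->
  phi (\sum_(j <- s) F j) = \sum_(j <- s) phi (F j).
Proof.
by move=> eAeF; rewrite (subspace_sum_additive subspace_eAe phi0 phiD s eAeF).
Qed.

Definition ptrace_term x i := phi (ch i (mul x (al i e))).

Definition ptrace x := \sum_(i \in [set: I]) ptrace_term x i.

Lemma ptrace_seq x s : uniq s -> (forall i, i \notin s -> ptrace_term x i = 0) ->
  ptrace x = \sum_(i <- s) ptrace_term x i.
Proof. exact: fsumT_seq. Qed.

Lemma ptrace_term_supp x s i : coord_supp x s -> i \notin s -> ptrace_term x i = 0.
Proof.
by move=> supp_x s_i; rewrite /ptrace_term (supp_x i s_i).2 ?phi0 //; apply: al_Ae_e.
Qed.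

Lemma ptrace_termD x y i : ptrace_term (x + y) i = ptrace_term x i + ptrace_term y i.
Proof.
by rewrite /ptrace_term amulDl ch_D ?phiD //; try apply: ch_eAe; apply: Ae_mul_al.
Qed.

Lemma ptrace_termZ c x i : ptrace_term (c *: x) i = c * ptrace_term x i.
Proof.
by rewrite /ptrace_term amulZl ch_Z ?phiZ //; try apply: ch_eAe; apply: Ae_mul_al.
Qed.

Lemma ptraceD x y : ptrace (x + y) = ptrace x + ptrace y.
Proof.
have [s [us /ptrace_term_supp sx /ptrace_term_supp sy]] := exists_coord_supp2 x y.
rewrite (ptrace_seq us sx) (ptrace_seq us sy) (ptrace_seq us) => [|i s_i].
  by rewrite -big_split; apply: eq_bigr => i _; apply: ptrace_termD.
by rewrite ptrace_termD sx ?sy ?addr0.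
Qed.

Lemma ptraceZ c x : ptrace (c *: x) = c * ptrace x.
Proof.
have [s [us /ptrace_term_supp sx _]] := exists_coord_supp2 x x.
rewrite (ptrace_seq us sx) (ptrace_seq us) => [|i s_i].
  by rewrite mulr_sumr; apply: eq_bigr => i _; apply: ptrace_termZ.
by rewrite ptrace_termZ sx ?mulr0.
Qed.

Lemma ptrace0 : ptrace 0 = 0.
Proof. by rewrite -(scale0r (0 : A)) ptraceZ mul0r. Qed.

Lemma ptrace_mul x y s : uniq s -> coord_supp x s -> ptrace (mul x y) =
  \sum_(i <- s) \sum_(j <- s) phi (mul (ch i (mul x (al j e))) (ch j (mul y (al i e)))).
Proof.
move=> us sx; rewrite (ptrace_seq us) => [|i s_i]; last first.
  by rewrite /ptrace_term -amulA (sx i s_i).2 ?phi0 //; apply: Ae_mul_al.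
apply: eq_bigr => i _; have Aey := Ae_mul_al y i.
have eAe_ch j : eAe (ch j (mul y (al i e))) by apply: ch_eAe.
rewrite /ptrace_term -amulA (mul_coord_expansion us sx Aey) ch_sum => [|j]; last first.
  exact/(lidealM lideal_Ae)/al_Ae.
rewrite phi_sum => [|j]; last exact/ch_eAe/(lidealM lideal_Ae)/al_Ae.
by apply: eq_bigr => j _; rewrite alE // amulA ch_M //; apply: Ae_mul_al.
Qed.

Lemma ptraceC x y : ptrace (mul x y) = ptrace (mul y x).
Proof.
have [s [us sx sy]] := exists_coord_supp2 x y.
rewrite (ptrace_mul y us sx) (ptrace_mul x us sy) exchange_big.
apply: eq_bigr => i _; apply: eq_bigr => j _.
by rewrite phiC //; apply/ch_eAe/Ae_mul_al.
Qed.

Lemma ptrace_eAe b : eAe b -> ptrace b = phi b.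
Proof.
move=> eAeb; have Aeb := eAe_Ae eAeb.
have [t [ut [t0 bE]]] := coord_expansion Aeb.
have termE i : ptrace_term b i = phi (mul e (al i (ch i b))).
  have eAe_eal : eAe (mul e (al i e)) := Ae_eAe (al_Ae_e i).
  rewrite /ptrace_term -{1}(Ae_idr Aeb) -amulA ch_M // phiC //; last exact: ch_eAe.
  by rewrite -amulA -alE //; apply: ch_eAe.
rewrite (ptrace_seq ut) => [|i t_i]; last by rewrite termE t0 // al0 amulr0 phi0.
under eq_bigr do rewrite termE.
rewrite -phi_sum => [|i]; last exact/Ae_eAe/al_Ae/ch_eAe.
by rewrite -amul_sumr -bE eAe_idl.
Qed.

Lemma ptrace_SLF : SLF mul ptrace.
Proof. by split; [exact: ptraceD | split; [exact: ptraceZ | exact: ptraceC]]. Qed.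

Lemma ptrace_left_pseudotrace : is_left_pseudotrace mul e al ch phi ptrace.
Proof.
move=> x; have [s [us /ptrace_term_supp sx _]] := exists_coord_supp2 x x.
exists s; split; first exact/NoDupP.
split; last exact: ptrace_seq us sx.
by move=> i /InP s_i; apply: sx; apply/negP.
Qed.

Lemma ptrace_SLF_unique : SLF mul phi -> (forall x, in_AeA e x) ->
  forall x, ptrace x = phi x.
Proof.
move=> [phiD' [_ phiC']] AeA x; have [s ->] := AeA x.
elim: s => [|[a b] s IHs]; first by rewrite !big_nil ptrace0 phi0.
rewrite !big_cons ptraceD phiD' IHs; congr (_ + _) => /=.
have -> : mul a (mul e b) = mul (mul a e) (mul e b) by rewrite -amulA (amulA e) ide.
rewrite ptraceC phiC' ptrace_eAe //.
by exists (mul b a); rewrite -!amulA.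
Qed.

Lemma SLF_left_pseudotrace : SLF mul phi -> (forall x, in_AeA e x) ->
  is_left_pseudotrace mul e al ch phi phi.
Proof.
move=> SLFphi AeA x; have [s [nd [s0 trE]]] := ptrace_left_pseudotrace x.
by exists s; rewrite -trE ptrace_SLF_unique.
Qed.

End Pseudotrace.

Section AUFCoordinates.
Variables (e : A) (I : eqType) (f : I -> A).
Hypotheses (ide : idempotent mul e) (idf : forall i, idempotent mul (f i))
  (orthf : forall i j, i <> j -> mul (f i) (f j) = 0)
  (fdec : forall x, exists (s : seq (I * I)) (a : I * I -> A),
     x = \sum_(p <- s) mul (f p.1) (mul (a p) (f p.2))).

Lemma AUF_left_support x : exists s : seq I, [/\ uniq s,
  forall r, r \notin s -> mul (f r) x = 0 & x = \sum_(r <- s) mul (f r) x].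
Proof.
have [s [a ->]] := fdec x.
exists (undup [seq p.1 | p <- s]); split; first exact: undup_uniq.
  move=> r r_s; rewrite amul_sumr big1_seq // => p /andP[_ s_p].
  rewrite amulA orthf ?amul0r // => r_p; move: r_s; rewrite r_p mem_undup.
  by rewrite (map_f fst s_p).
under [RHS]eq_bigr => r _ do rewrite amul_sumr.
rewrite exchange_big /=; apply: eq_big_seq => p s_p.
rewrite (bigD1_seq p.1) /= ?undup_uniq ?mem_undup ?(map_f fst s_p) //.
rewrite big1 ?addr0 => [|r /eqP r_p]; first by rewrite [RHS]amulA idf.
by rewrite amulA orthf ?amul0r.
Qed.

Lemma AUF_right_support x : exists s : seq I, forall r, r \notin s -> mul x (f r) = 0.
Proof.
have [s [a ->]] := fdec x; exists [seq p.2 | p <- s] => r r_s.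
rewrite amul_suml big1_seq // => p /andP[_ s_p].
rewrite -!amulA orthf ?amulr0 // => p_r; move: r_s; rewrite -p_r.
by rewrite (map_f snd s_p).
Qed.

Variable fAeA : I -> seq (A * A).
Hypothesis fAeAE : forall r, f r = \sum_(q <- fAeA r) mul q.1 (mul e q.2).

Definition fAeA_l r k := (nth (0, 0) (fAeA r) k).1.
Definition fAeA_r r k := (nth (0, 0) (fAeA r) k).2.

Lemma fAeA_nthE r :
  f r = \sum_(0 <= k < size (fAeA r)) mul (fAeA_l r k) (mul e (fAeA_r r k)).
Proof. by rewrite fAeAE (big_nth (0, 0)). Qed.

Lemma fAeA_nth_default r k :
  (size (fAeA r) <= k)%N -> fAeA_l r k = 0 /\ fAeA_r r k = 0.
Proof. by move=> k_big; rewrite /fAeA_l /fAeA_r nth_default. Qed.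

Definition AUF_al (i : I * nat) b := mul (f i.1) (mul (fAeA_l i.1 i.2) (mul e b)).
Definition AUF_ch (i : I * nat) v := mul e (mul (fAeA_r i.1 i.2) (mul (f i.1) v)).

Definition AUF_indices (s : seq I) :=
  [seq (r, k) | r <- s, k <- index_iota 0 (size (fAeA r))].

Lemma AUF_indicesP s r k :
  (k < size (fAeA r))%N -> ((r, k) \in AUF_indices s) = (r \in s).
Proof.
move=> k_small; apply/allpairsPdep/idP => [[r' [k' [r's _ [-> _]]]] // | r_s].
by exists r, k; rewrite mem_index_iota.
Qed.

Lemma AUF_indices_out s r k : ~ List.In (r, k) (AUF_indices s) ->
  r \notin s \/ (size (fAeA r) <= k)%N.
Proof.
move=> /InP; have [k_small|] := ltnP k (size (fAeA r)); last by right.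
by rewrite AUF_indicesP //; left; apply/negP.
Qed.

Lemma AUF_coord_expansion xi : exists s : seq (I * nat), [/\ List.NoDup s,
  forall i, ~ List.In i s -> AUF_ch i xi = 0 &
  xi = \sum_(i <- s) AUF_al i (AUF_ch i xi)].
Proof.
have [s [us s0 xiE]] := AUF_left_support xi.
exists (AUF_indices s); split.
- apply/NoDupP; apply: allpairs_uniq_dep => // [r _|[r k] [r' k'] _ _ [-> ->]] //.
  exact: iota_uniq.
- move=> [r k] /AUF_indices_out [r_s|k_big]; rewrite /AUF_ch /=.
    by rewrite s0 // !amulr0.
  by rewrite (fAeA_nth_default k_big).2 amul0r amulr0.
rewrite big_allpairs_dep /= {1}xiE; apply: eq_bigr => r _.
have termE k : AUF_al (r, k) (AUF_ch (r, k) xi) =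
    mul (f r) (mul (mul (fAeA_l r k) (mul e (fAeA_r r k))) (mul (f r) xi)).
  by rewrite /AUF_al /AUF_ch /= (amulA e e) ide -!amulA.
rewrite (eq_bigr _ (fun k _ => termE k)) -amul_sumr -amul_suml -fAeA_nthE.
by rewrite !amulA !idf.
Qed.

Lemma AUF_coord_finite x : exists s : seq (I * nat), forall i, ~ List.In i s ->
  (forall b, mul x (AUF_al i b) = 0) /\ (forall xi, AUF_ch i (mul x xi) = 0).
Proof.
have [sl [_ sl0 _]] := AUF_left_support x.
have [sr sr0] := AUF_right_support x.
exists (AUF_indices (sl ++ sr)) => -[r k] /AUF_indices_out [|k_big].
  rewrite mem_cat negb_or => /andP[r_sl r_sr]; rewrite /AUF_al /AUF_ch /=.
  by split=> [b|xi]; rewrite amulA ?sr0 ?(amulA (f r)) ?sl0 ?amul0r ?amulr0.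
rewrite /AUF_al /AUF_ch /=; have [-> ->] := fAeA_nth_default k_big.
by split=> *; rewrite amul0r ?amulr0.
Qed.

Lemma AUF_left_coord_sys : left_coord_sys mul e AUF_al AUF_ch.
Proof.
split.
  move=> [r k] _ [c ->]; rewrite /AUF_al /=.
  by exists (mul (f r) (mul (fAeA_l r k) (mul e (mul e c)))); rewrite -!amulA.
split; first by move=> *; rewrite /AUF_al !amulDr.
split; first by move=> *; rewrite /AUF_al !amulZr.
split; first by move=> *; rewrite /AUF_al -!amulA.
split.
  move=> [r k] _ [c ->]; rewrite /AUF_ch /=.
  by exists (mul (fAeA_r r k) (mul (f r) c)); rewrite -!amulA.
split; first by move=> *; rewrite /AUF_ch !amulDr.
split; first by move=> *; rewrite /AUF_ch !amulZr.
split; first by move=> *; rewrite /AUF_ch -!amulA.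
split=> [xi _|x]; first by have [s [? ? ?]] := AUF_coord_expansion xi; exists s.
have [s s0] := AUF_coord_finite x.
by exists s => i /s0 [al0 ch0]; split=> *.
Qed.

End AUFCoordinates.

End NonUnitalAlgebra.

Theorem theorem6p6 (R : realType) (A : lmodType R[i]) (mul : A -> A -> A) (e : A) :
  is_algebra mul -> strongly_AUF mul -> generating mul e ->
  (exists (I : Type) (al ch : I -> A -> A), left_coord_sys mul e al ch) /\
  (forall (I : Type) (al ch : I -> A -> A), left_coord_sys mul e al ch ->
     (* psi |-> psi|_{eAe} maps SLF(A) to SLF(eAe), and Tr^{psi|eAe} = psi *)
     (forall psi : A -> R[i], SLF mul psi ->
        SLF_eAe mul e psi /\ is_left_pseudotrace mul e al ch psi psi) /\
     (* Tr^phi lies in SLF(A) and restricts to phi on eAe *)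
     (forall phi : A -> R[i], SLF_eAe mul e phi ->
        exists psi : A -> R[i], SLF mul psi /\
          (forall b, in_eAe mul e b -> psi b = phi b) /\
          is_left_pseudotrace mul e al ch phi psi)).
Proof.
move=> alg [AUFA _] gen; have ide : idempotent mul e by case: gen.
split.
  have [I [f [idf [orthf [_ fdec]]]]] := AUFA.
  have [fAeA fAeAE] := choice (fun r => generating_idempotent_in_AeA alg gen (idf r)).
  exists ({classic I} * nat)%type.
  exists (@AUF_al _ _ mul e {classic I} f fAeA), (@AUF_ch _ _ mul e {classic I} f fAeA).
  exact: AUF_left_coord_sys.
move=> I al ch lcs; have lcsI : @left_coord_sys _ _ mul e {classic I} al ch := lcs.
split=> [psi SLFpsi | phi phiS].
  have psiS := SLF_restrict e SLFpsi; split=> //.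
  have AeA := AUF_generating_in_AeA alg AUFA gen.
  exact (SLF_left_pseudotrace alg ide lcsI psiS SLFpsi AeA).
exists (@ptrace _ _ mul e {classic I} al ch phi).
split; first exact (ptrace_SLF alg ide lcsI phiS).
split; first exact (ptrace_eAe alg ide lcsI phiS).
exact (ptrace_left_pseudotrace alg ide lcsI phiS).
Qed.
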